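(* For every tree $T=(V,E,w)$ with positive integer costs there exists an optimal extended strategy function $f$ for $T$ such that $|f(v)|=w(v)$ for every $v\in V$.
   Context: Intervals are of the form $[a,b)$ with integers $0\le a<b$, and $|[a,b)|=b-a$. For intervals $I=[a,b)$, $I'=[a',b')$ write $I>I'$ iff $a\ge b'$. An extended strategy function for $T$ is a map $f$ assigning to each vertex $v$ an interval $f(v)$ with $|f(v)|\ge w(v)$, such that for any distinct $v_1,v_2$ with $f(v_1)\cap f(v_2)\ne\emptyset$, the path between $v_1$ and $v_2$ contains a vertex $v_3$ with $f(v_3)>f(v_1)$ and $f(v_3)>f(v_2)$. An extended strategy function $f$ is optimal if $\sup\bigcup_{v\in V}f(v)$ is minimum among all extended strategy functions for $T$. *)

From mathcomp Require Import all_boot.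
Set Implicit Arguments. Unset Strict Implicit. Unset Printing Implicit Defensive.

(* A tree: connected and without cycles (a cycle = a duplicate-free closed
   walk on at least 3 vertices). *)
Definition connected_graph (T : finType) (e : rel T) : Prop :=
  forall x y : T, connect e x y.
Definition acyclic_graph (T : finType) (e : rel T) : Prop :=
  forall p : seq T, uniq p -> 3 <= size p -> ~~ cycle e p.
Definition is_tree (T : finType) (e : rel T) : Prop :=
  connected_graph e /\ acyclic_graph e.

Definition on_path (T : finType) (e : rel T) (x y z : T) : Prop :=
  exists p : seq T, [/\ path e x p, last x p = y, uniq (x :: p) & z \in x :: p].

(* Interval [a,b) encoded by the pair (a,b); valid iff a < b. *)
Definition interval := (nat * nat)%type.
Definition ivalid (I : interval) : bool := I.1 < I.2.
Definition ilen (I : interval) : nat := I.2 - I.1.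
Definition igt (I J : interval) : bool := J.2 <= I.1.
Definition ioverlap (I J : interval) : bool := (I.1 < J.2) && (J.1 < I.2).

Definition ext_strategy (T : finType) (e : rel T) (w : T -> nat)
    (f : T -> interval) : Prop :=
  [/\ forall v, ivalid (f v),
      forall v, w v <= ilen (f v) &
      forall v1 v2, v1 != v2 -> ioverlap (f v1) (f v2) ->
        exists v3, [/\ on_path e v1 v2 v3, igt (f v3) (f v1) & igt (f v3) (f v2)]].

(* sup of the union of the intervals [a,b): the largest right endpoint *)
Definition strategy_cost (T : finType) (f : T -> interval) : nat :=
  \max_(v : T) (f v).2.

Definition optimal_ext_strategy (T : finType) (e : rel T) (w : T -> nat)
    (f : T -> interval) : Prop :=
  ext_strategy e w f /\
  forall g, ext_strategy e w g -> strategy_cost f <= strategy_cost g.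

From mathcomp Require Import all_boot.
From mathcomp Require Import zify.
From Stdlib Require Import Classical.

Set Implicit Arguments.
Unset Strict Implicit.
Unset Printing Implicit Defensive.

(* Stacking the intervals in pairwise disjoint blocks gives an extended
   strategy function, so an optimal one exists.  Replacing every interval of
   an optimal f by its rightmost w(v) points keeps all right endpoints, hence
   the cost, and remains a strategy: shrinking intervals can only destroy
   overlaps, and since right endpoints are fixed while left endpoints move
   right, every relation f(v3) > f(v) survives. *)

Definition isub (I J : interval) : bool := (J.1 <= I.1) && (I.2 <= J.2).

Lemma ioverlap_sub (I I' J J' : interval) :
  isub I I' -> isub J J' -> ioverlap I J -> ioverlap I' J'.
Proof. by rewrite /isub /ioverlap => /andP[? ?] /andP[? ?] /andP[? ?]; lia. Qed.

Lemma igt_sub (I I' J J' : interval) :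
  isub I' I -> isub J' J -> igt I J -> igt I' J'.
Proof. by rewrite /isub /igt => /andP[? ?] /andP[? ?] ?; lia. Qed.

Lemma ext_strategy_sub (T : finType) (e : rel T) (w : T -> nat)
    (f g : T -> interval) :
  ext_strategy e w f -> (forall v, isub (g v) (f v)) ->
  (forall v, ivalid (g v)) -> (forall v, w v <= ilen (g v)) ->
  ext_strategy e w g.
Proof.
move=> [_ _ sep_f] sub_gf valid_g len_g; split=> // v1 v2 ne12 ov12.
have [v3 [on3 gt31 gt32]] :=
  sep_f v1 v2 ne12 (ioverlap_sub (sub_gf v1) (sub_gf v2) ov12).
by exists v3; split=> //; apply: igt_sub (sub_gf _) (sub_gf _) _.
Qed.

Lemma block_ioverlap (M i j : nat) :
  ioverlap (i * M, i * M + M) (j * M, j * M + M) -> i = j.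
Proof.
rewrite /ioverlap /= -!mulSnr => /andP[lt_ij lt_ji].
have M_gt0 : 0 < M by case: (posnP M) lt_ij => [->|]; rewrite ?muln0.
by rewrite !ltn_pmul2r // in lt_ij lt_ji; lia.
Qed.

Lemma ext_strategy_exists (T : finType) (e : rel T) (w : T -> nat) :
  exists f, ext_strategy e w f.
Proof.
pose M := (\max_(v : T) w v).+1.
exists (fun v => (enum_rank v * M, enum_rank v * M + M)); split.
- by move=> v; rewrite /ivalid /=; lia.
- by move=> v; rewrite /ilen /= addKn; apply/leqW/leq_bigmax.
- move=> v1 v2 ne12 /block_ioverlap /val_inj /enum_rank_inj eq12.
  by rewrite eq12 eqxx in ne12.
Qed.

Lemma optimal_ext_strategy_exists (T : finType) (e : rel T) (w : T -> nat) :
  exists f, optimal_ext_strategy e w f.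
Proof.
have [f0 strat_f0] := ext_strategy_exists e w.
suff: forall n f, ext_strategy e w f -> strategy_cost f <= n ->
    exists f, optimal_ext_strategy e w f by apply; [exact: strat_f0|].
elim=> [|n IHn] f strat_f cost_f.
  by exists f; split=> // g _; apply: leq_trans cost_f _.
have [[g [strat_g lt_gf]] | no_better] :=
  classic (exists g, ext_strategy e w g /\ strategy_cost g < strategy_cost f).
  by apply: (IHn g) => //; rewrite -ltnS (leq_trans lt_gf).
exists f; split=> // g strat_g; rewrite leqNgt; apply/negP=> lt_gf.
by apply: no_better; exists g.
Qed.

Definition shrink_right (T : finType) (w : T -> nat) (f : T -> interval)
    (v : T) : interval :=
  ((f v).2 - w v, (f v).2).

Lemma strategy_cost_shrink_right (T : finType) (w : T -> nat)
    (f : T -> interval) :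
  strategy_cost (shrink_right w f) = strategy_cost f.
Proof. by []. Qed.

Lemma ext_strategy_shrink_right (T : finType) (e : rel T) (w : T -> nat)
    (f : T -> interval) :
  (forall v, 0 < w v) -> ext_strategy e w f ->
  ext_strategy e w (shrink_right w f).
Proof.
move=> w_gt0 strat_f; have [_ len_f _] := strat_f.
have len_fv v : w v <= (f v).2 - (f v).1 := len_f v.
apply: ext_strategy_sub strat_f _ _ _ => v;
  rewrite /isub /ivalid /ilen /=; move: (w_gt0 v) (len_fv v); lia.
Qed.

Theorem mainTheorem11 (T : finType) (e : rel T) (w : T -> nat) :
  symmetric e -> irreflexive e -> is_tree e ->
  (forall v, 0 < w v) ->
  exists f : T -> interval,
    optimal_ext_strategy e w f /\ forall v, ilen (f v) = w v.
Proof.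
move=> _ _ _ w_gt0.
have [f [strat_f opt_f]] := optimal_ext_strategy_exists e w.
exists (shrink_right w f); split; first split.
- exact: ext_strategy_shrink_right.
- by move=> g strat_g; rewrite strategy_cost_shrink_right; apply: opt_f.
- have [_ len_f _] := strat_f.
  by move=> v; rewrite /ilen /=; move: (len_f v); rewrite /ilen; lia.
Qed.
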